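(* Let $\iota:B\to A$ be an injective homomorphism of groups. Then $q\mapsto\mathrm{Ker}(q)=\{a\in A:q(a)=1_B\}$ is a bijection from the set of maps $q:A\to B$ satisfying (ZL1), (ZL2), (ZL3) onto the set $\mathcal C_\iota$ of complements to $\iota(B)$ in $A$. The inverse sends a complement $X$ to the map $q_X$ with $q_X(\iota(b)x)=b$ for $b\in B$, $x\in X$.
   Context: For a homomorphism $\iota:B\to A$, conditions on $q:A\to B$: (ZL1) $q(1_A)=1_B$; (ZL2) $q(\iota(b)a)=b\,q(a)$ for all $a\in A,b\in B$; (ZL3) $q(aa')=q(a\,\iota(q(a')))$ for all $a,a'\in A$. These maps constitute $\mathcal Z^1(\mathsf T^l_\iota,(B,m_B))$, the algebra structures on the left $B$-set $B$ for the monad $A\otimes_B-$ induced by $\iota$. A complement to a subgroup $H$ of $A$ is a subgroup $X$ of $A$ with $HX=A$ and $H\cap X=\{1_A\}$ (so every $a\in A$ is uniquely $a=hx$ with $h\in H,x\in X$). *)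

Record group := Group {
  carrier :> Type;
  gmul : carrier -> carrier -> carrier;
  gone : carrier;
  ginv : carrier -> carrier;
  gmulA : forall x y z, gmul x (gmul y z) = gmul (gmul x y) z;
  gmul1 : forall x, gmul x gone = x;
  g1mul : forall x, gmul gone x = x;
  gmulV : forall x, gmul x (ginv x) = gone;
  gVmul : forall x, gmul (ginv x) x = gone
}.

Arguments gmul {g} _ _.
Arguments gone {g}.
Arguments ginv {g} _.

Definition is_hom (B A : group) (f : B -> A) : Prop :=
  forall x y : B, f (gmul x y) = gmul (f x) (f y).

Definition injective {X Y : Type} (f : X -> Y) : Prop :=
  forall x y, f x = f y -> x = y.

Definition is_subgroup (A : group) (H : A -> Prop) : Prop :=
  H gone /\ (forall x y, H x -> H y -> H (gmul x y)) /\
  (forall x, H x -> H (ginv x)).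

Definition image_set (B A : group) (iota : B -> A) : A -> Prop :=
  fun a => exists b, iota b = a.

Definition is_complement (A : group) (H X : A -> Prop) : Prop :=
  is_subgroup A X /\
  (forall a : A, exists h x, H h /\ X x /\ a = gmul h x) /\
  (forall a : A, H a -> X a -> a = gone).

Definition ZL (B A : group) (iota : B -> A) (q : A -> B) : Prop :=
  q gone = gone /\
  (forall (a : A) (b : B), q (gmul (iota b) a) = gmul b (q a)) /\
  (forall a a' : A, q (gmul a a') = q (gmul a (iota (q a')))).

Definition Ker (B A : group) (q : A -> B) : A -> Prop :=
  fun a => q a = gone.

(* Condition (ZL2) gives q (iota (q a)^-1 * a) = 1, so every a factors as
   iota (q a) * k with k in Ker q; (ZL3) makes Ker q closed under products,
   and q (iota b) = b makes it meet iota(B) trivially.  Since such a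
   factorization determines q, two maps with the same kernel agree.
   Conversely, a complement X gives a unique factorization a = iota b * x,
   and q_X a := b satisfies (ZL3) because a * iota (q_X a') and a a' differ
   on the right by an element of X. *)

From Stdlib Require Import ClassicalEpsilon.

Section GroupLemmas.
Variable G : group.
Implicit Types x y z : G.

Lemma mulKg x y : gmul (ginv x) (gmul x y) = y.
Proof. rewrite gmulA, gVmul, g1mul; reflexivity. Qed.

Lemma mulKVg x y : gmul x (gmul (ginv x) y) = y.
Proof. rewrite gmulA, gmulV, g1mul; reflexivity. Qed.

Lemma mulg_cancel_l x y z : gmul x y = gmul x z -> y = z.
Proof. intros E; rewrite <- (mulKg x y), E, mulKg; reflexivity. Qed.

Lemma invg_unique x y : gmul x y = gone -> ginv x = y.
Proof. intros E; apply (mulg_cancel_l x); rewrite gmulV, E; reflexivity. Qed.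

Lemma invgM x y : ginv (gmul x y) = gmul (ginv y) (ginv x).
Proof.
  apply invg_unique.
  rewrite <- gmulA, (gmulA _ y), gmulV, g1mul, gmulV; reflexivity.
Qed.

Lemma invgK x : ginv (ginv x) = x.
Proof. apply invg_unique, gVmul. Qed.

Lemma invg1 : ginv (@gone G) = gone.
Proof. apply invg_unique, gmul1. Qed.

End GroupLemmas.

Arguments mulg_cancel_l {G} x {y z}.

Section Homomorphisms.
Variables (A B : group) (iota : B -> A).
Hypothesis hom : is_hom B A iota.

Lemma hom_one : iota gone = gone.
Proof. apply (mulg_cancel_l (iota gone)); rewrite <- hom, !gmul1; reflexivity. Qed.

Lemma hom_inv b : iota (ginv b) = ginv (iota b).
Proof. symmetry; apply invg_unique; rewrite <- hom, gmulV; apply hom_one. Qed.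

End Homomorphisms.

Arguments hom_one {A B iota}.
Arguments hom_inv {A B iota}.

Section KernelOfZL.
Variables (A B : group) (iota : B -> A) (q : A -> B).
Hypotheses (hom : is_hom B A iota) (hq : ZL B A iota q).

Lemma ZL_iota_mul_ker b k : Ker B A q k -> q (gmul (iota b) k) = b.
Proof.
  destruct hq as [_ [ZL2 _]]; intros Hk.
  rewrite ZL2, Hk, gmul1; reflexivity.
Qed.

Lemma ZL_iota b : q (iota b) = b.
Proof.
  destruct hq as [ZL1 _].
  rewrite <- (gmul1 _ (iota b)); apply ZL_iota_mul_ker, ZL1.
Qed.

Lemma ZL_ker_factor a : Ker B A q (gmul (ginv (iota (q a))) a).
Proof.
  destruct hq as [_ [ZL2 _]]; unfold Ker.
  rewrite <- (hom_inv hom), ZL2, gVmul; reflexivity.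
Qed.

Lemma ZL_ker_subgroup : is_subgroup A (Ker B A q).
Proof.
  destruct hq as [ZL1 [_ ZL3]]; unfold Ker.
  split; [exact ZL1 | split].
  - intros x y Hx Hy; rewrite ZL3, Hy, (hom_one hom), gmul1; exact Hx.
  - intros x Hx.
    assert (E := ZL3 (ginv x) x).
    rewrite gVmul, Hx, (hom_one hom), gmul1, ZL1 in E.
    symmetry; exact E.
Qed.

Lemma ZL_ker_complement : is_complement A (image_set B A iota) (Ker B A q).
Proof.
  split; [exact ZL_ker_subgroup | split].
  - intros a; exists (iota (q a)), (gmul (ginv (iota (q a))) a).
    split; [exists (q a); reflexivity | split; [apply ZL_ker_factor |]].
    rewrite mulKVg; reflexivity.
  - intros a [b <-] Hb; unfold Ker in Hb.
    rewrite ZL_iota in Hb; rewrite Hb; apply (hom_one hom).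
Qed.

End KernelOfZL.

Lemma ZL_eq_of_ker (A B : group) (iota : B -> A) (q1 q2 : A -> B) :
  is_hom B A iota -> ZL B A iota q1 -> ZL B A iota q2 ->
  (forall a, Ker B A q1 a <-> Ker B A q2 a) -> forall a, q1 a = q2 a.
Proof.
  intros hom hq1 hq2 Hker a.
  assert (Hk : Ker B A q2 (gmul (ginv (iota (q1 a))) a))
    by (apply Hker, ZL_ker_factor; assumption).
  rewrite <- (mulKVg _ (iota (q1 a)) a) at 2.
  symmetry; apply ZL_iota_mul_ker; assumption.
Qed.

Section ProjectionOfComplement.
Variables (A B : group) (iota : B -> A) (X : A -> Prop).
Hypotheses (hom : is_hom B A iota) (inj : injective iota)
  (hX : is_complement A (image_set B A iota) X).

Lemma complement_factor a : exists b, X (gmul (ginv (iota b)) a).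
Proof.
  destruct hX as [_ [Hdec _]].
  destruct (Hdec a) as [h [x [[b <-] [Hx ->]]]].
  exists b; rewrite mulKg; exact Hx.
Qed.

Lemma complement_factor_unique a b b' :
  X (gmul (ginv (iota b)) a) -> X (gmul (ginv (iota b')) a) -> b = b'.
Proof.
  destruct hX as [[_ [Xmul Xinv]] [_ Hmeet]]; intros Hb Hb'.
  assert (E : gmul (ginv (iota b)) (iota b') = gone).
  { apply Hmeet.
    - exists (gmul (ginv b) b'); rewrite hom, (hom_inv hom); reflexivity.
    - assert (P := Xmul _ _ Hb (Xinv _ Hb')).
      rewrite invgM, invgK, <- gmulA, mulKVg in P; exact P. }
  apply inj, (mulg_cancel_l (ginv (iota b))); rewrite gVmul, E; reflexivity.
Qed.

(* The map q_X of the paper: the B-component of a in A = iota(B) X. *)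
Definition complement_proj (a : A) : B :=
  proj1_sig (constructive_indefinite_description _ (complement_factor a)).

Lemma complement_projP a : X (gmul (ginv (iota (complement_proj a))) a).
Proof. exact (proj2_sig (constructive_indefinite_description _ (complement_factor a))). Qed.

Lemma complement_proj_eq a b : X (gmul (ginv (iota b)) a) -> complement_proj a = b.
Proof. apply complement_factor_unique, complement_projP. Qed.

Lemma complement_proj_iota_mul b x : X x -> complement_proj (gmul (iota b) x) = b.
Proof. intros Hx; apply complement_proj_eq; rewrite mulKg; exact Hx. Qed.

Lemma complement_proj_ZL : ZL B A iota complement_proj.
Proof.
  destruct hX as [[X1 [Xmul _]] _].
  split; [| split].
  - apply complement_proj_eq; rewrite (hom_one hom), invg1, gmul1; exact X1.
  - intros a b; apply complement_proj_eq.
    rewrite hom, invgM, <- gmulA, mulKg; apply complement_projP.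
  - intros a a'; apply complement_proj_eq.
    assert (P := Xmul _ _ (complement_projP (gmul a (iota (complement_proj a'))))
                      (complement_projP a')).
    rewrite <- !gmulA, mulKVg in P; exact P.
Qed.

Lemma complement_proj_ker a : Ker B A complement_proj a <-> X a.
Proof.
  unfold Ker; split.
  - intros E; assert (P := complement_projP a).
    rewrite E, (hom_one hom), invg1, g1mul in P; exact P.
  - intros Ha; apply complement_proj_eq; rewrite (hom_one hom), invg1, g1mul; exact Ha.
Qed.

End ProjectionOfComplement.

Theorem proposition4p3 (A B : group) (iota : B -> A)
  (hom : is_hom B A iota) (inj : injective iota) :
  (* q |-> Ker q lands in the set of complements to iota(B) *)
  (forall q : A -> B, ZL B A iota q ->
     is_complement A (image_set B A iota) (Ker B A q)) /\
  (* injectivity *)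
  (forall q1 q2 : A -> B, ZL B A iota q1 -> ZL B A iota q2 ->
     (forall a, Ker B A q1 a <-> Ker B A q2 a) -> forall a, q1 a = q2 a) /\
  (* surjectivity, with the inverse X |-> q_X, q_X(iota(b) x) = b *)
  (forall X : A -> Prop, is_complement A (image_set B A iota) X ->
     exists qX : A -> B,
       ZL B A iota qX /\
       (forall a, Ker B A qX a <-> X a) /\
       (forall (b : B) (x : A), X x -> qX (gmul (iota b) x) = b)).
Proof.
  split; [| split].
  - intros q hq; apply ZL_ker_complement; assumption.
  - intros q1 q2; apply ZL_eq_of_ker, hom.
  - intros X hX; exists (complement_proj A B iota X hX).
    split; [| split].
    + exact (complement_proj_ZL A B iota X hom inj hX).
    + exact (complement_proj_ker A B iota X hom inj hX).
    + exact (complement_proj_iota_mul A B iota X hom inj hX).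
Qed.
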